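(* Let $M$ be a finite-dimensional simple $YQ(1)$-module on which each central element $Z_{2i}$ ($i\ge0$) acts by a scalar $\chi_{2i}$, and set $\chi(u)=\sum_{i\ge0}\chi_{2i}u^{-2i-1}$. Then $\chi(u)$ is a rational function of the form $\frac{a_0u^{-1}+\dots+a_pu^{-2p-1}}{1+c_1u^{-2}+\dots+c_qu^{-2q}}$ for some $p,q\ge0$ and $a_i,c_j\in\mathbb C$ (equality of formal power series in $u^{-1}$).
   Context: $YQ(1)$ is the associative unital superalgebra over $\mathbb C$ generated by $T_{i,j}^{(m)}$, $m\geq1$, $i,j\in\{1,-1\}$, of parity $p(i)+p(j)$ where $p(1)=0$, $p(-1)=1$. With $T_{i,j}(u)=\delta_{ij}+\sum_{m\ge1}T^{(m)}_{i,j}u^{-m}$, the defining relations are, for all $i,j,k,l$: $(u^2-v^2)[T_{i,j}(u),T_{k,l}(v)](-1)^{p(i)p(k)+p(i)p(l)+p(k)p(l)}=(u+v)(T_{k,j}(u)T_{i,l}(v)-T_{k,j}(v)T_{i,l}(u))-(u-v)(T_{-k,j}(u)T_{-i,l}(v)-T_{k,-j}(v)T_{i,-l}(u))(-1)^{p(k)+p(l)}$, and $T_{i,j}(-u)=T_{-i,-j}(u)$ (supercommutators). Set $\eta_i=(-\tfrac12)^i(\operatorname{ad}T^{(2)}_{1,1})^i(T^{(1)}_{1,-1})$ and $Z_{2i}=\frac12[\eta_0,\eta_{2i}]$; the $Z_{2i}$ are central in $YQ(1)$. *)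

From HB Require Import structures.
From mathcomp Require Import all_boot all_order all_algebra complex.
From mathcomp Require Import Rstruct.
Set Implicit Arguments. Unset Strict Implicit. Unset Printing Implicit Defensive.
Import Order.TTheory GRing.Theory Num.Theory.
Local Open Scope ring_scope.

Definition CC : Type := complex Rdefinitions.R.

(* Indices {1,-1}: [true] stands for 1, [false] for -1.
   Negation i |-> -i is [negb]. Parity: p(1) = 0, p(-1) = 1. *)
Definition idx := bool.
Definition par (i : idx) : nat := if i then 0%N else 1%N.

Definition sgn (k : nat) : CC := (-1) ^+ k.

Section YQ1.
Variables n0 n1 : nat.
(* A finite-dimensional super vector space V = V_0 (+) V_1 over CC, with
   dim V_0 = n0 and dim V_1 = n1; V is identified with column vectors of
   size n0 + n1 (first n0 coordinates even, last n1 odd), and End(V) with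
   'M_(n0+n1), composition being matrix product. *)
Local Notation n := (n0 + n1)%N.
Local Notation Mat := 'M[CC]_(n0 + n1).

Definition is_even (A : Mat) : Prop := ursubmx A = 0 /\ dlsubmx A = 0.
Definition is_odd (A : Mat) : Prop := ulsubmx A = 0 /\ drsubmx A = 0.
Definition has_parity (k : nat) (A : Mat) : Prop :=
  if odd k then is_odd A else is_even A.

Definition scomm (pa pb : nat) (A B : Mat) : Mat :=
  A *m B - sgn (pa * pb) *: (B *m A).

(* A representation is given by the images gen i j m of the generators
   T_{i,j}^{(m)}, m >= 1 (the value at m = 0 is ignored). *)
Variable gen : idx -> idx -> nat -> Mat.

(* coefficients of T_{i,j}(u) = delta_ij + sum_{m>=1} T^{(m)}_{ij} u^{-m} *)
Definition Tc (i j : idx) (m : nat) : Mat :=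
  if m == 0%N then (i == j)%:R%:M else gen i j m.

Definition TC (i j : idx) (a : int) : Mat :=
  match a with Posz m => Tc i j m | Negz _ => 0 end.

(* Coefficient of u^{-a} v^{-b} of both sides of the defining relation
   (u^2-v^2)[T_ij(u),T_kl(v)](-1)^{p(i)p(k)+p(i)p(l)+p(k)p(l)}
     = (u+v)(T_kj(u)T_il(v) - T_kj(v)T_il(u))
       - (u-v)(T_{-k,j}(u)T_{-i,l}(v) - T_{k,-j}(v)T_{i,-l}(u))(-1)^{p(k)+p(l)}.
   Multiplying a series F(u,v) = sum F(r,s) u^{-r} v^{-s} by u (resp. v)
   shifts the coefficient: (uF)(a,b) = F(a+1,b), (vF)(a,b) = F(a,b+1). *)
Definition rel_F (i j k l : idx) (r s : int) : Mat :=
  scomm (par i + par j) (par k + par l) (TC i j r) (TC k l s).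
Definition rel_G1 (i j k l : idx) (r s : int) : Mat :=
  TC k j r *m TC i l s - TC k j s *m TC i l r.
Definition rel_G2 (i j k l : idx) (r s : int) : Mat :=
  TC (~~ k) j r *m TC (~~ i) l s - TC k (~~ j) s *m TC i (~~ l) r.

Definition rel_lhs (i j k l : idx) (a b : int) : Mat :=
  sgn (par i * par k + par i * par l + par k * par l) *:
    (rel_F i j k l (a + 2) b - rel_F i j k l a (b + 2)).
Definition rel_rhs (i j k l : idx) (a b : int) : Mat :=
  (rel_G1 i j k l (a + 1) b + rel_G1 i j k l a (b + 1))
  - sgn (par k + par l) *: (rel_G2 i j k l (a + 1) b - rel_G2 i j k l a (b + 1)).

Definition YQ1_rep : Prop :=
  [/\ (forall i j m, (1 <= m)%N -> has_parity (par i + par j) (gen i j m)),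
      (forall i j k l (a b : int), rel_lhs i j k l a b = rel_rhs i j k l a b) &
      (* T_{i,j}(-u) = T_{-i,-j}(u), coefficientwise *)
      (forall i j m, (1 <= m)%N -> sgn m *: gen i j m = gen (~~ i) (~~ j) m)].

(* Graded subspaces and simplicity.  A subspace of V (column vectors) is
   represented by a matrix W whose rows are the transposed vectors; it is
   stable under A iff  W *m A^T <= W. *)
Definition V0 : Mat := block_mx 1%:M 0 0 0.
Definition V1 : Mat := block_mx 0 0 0 1%:M.
Definition graded_subspace m (W : 'M[CC]_(m, n0 + n1)) : bool :=
  (W <= (W :&: V0) + (W :&: V1))%MS.

Definition simple_rep : Prop :=
  (0 < n)%N /\
  forall m (W : 'M[CC]_(m, n0 + n1)), graded_subspace W ->
    (forall i j k, (1 <= k)%N -> stablemx W (gen i j k)^T) ->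
    \rank W = 0%N \/ \rank W = n.

Definition eta (k : nat) : Mat :=
  (- 2^-1) ^+ k *:
    iter k (fun X => scomm (par true + par true) (par true + par false)
                           (Tc true true 2) X) (Tc true false 1).

Definition Zc (i : nat) : Mat :=
  2^-1 *: scomm (par true + par false) (par true + par false) (eta 0) (eta (2 * i)).

End YQ1.

(* power series chi(x) = sum_i chi_{2i} x^{2i+1}, x = u^{-1};
   chi i stands for chi_{2i}. *)
Definition chi_series (chi : nat -> CC) (k : nat) : CC :=
  if odd k then chi k./2 else 0.

From Pilot Require Import Defs.
From HB Require Import structures.
From mathcomp Require Import all_boot all_order all_algebra complex.
From mathcomp Require Import Rstruct.
From mathcomp Require Import zify.
(* Since Z_{2i} = 1/2 [eta_0, eta_{2i}] and eta_{2i} = (1/4 ad_T^2)^i eta_0 with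
   T = T^{(2)}_{1,1}, vectorising End(M) exhibits chi_{2i} as a fixed linear
   functional evaluated at w Q^i for one matrix Q.  By Cayley-Hamilton the chi_{2i}
   satisfy a monic linear recurrence, so multiplying chi(u) by the reversed
   characteristic polynomial of Q, evaluated at u^{-2}, leaves a polynomial. *)

Set Implicit Arguments.
Unset Strict Implicit.
Unset Printing Implicit Defensive.
Import Order.TTheory GRing.Theory Num.Theory.
Local Open Scope ring_scope.

Lemma char_poly_powers_rec (R : comNzRingType) D (Q : 'M[R]_D) i :
  \sum_(j < D.+1) (char_poly Q)`_j *: Q ^+ (i + j) = 0.
Proof.
case: D Q => [|D] Q; first by apply/matrixP => -[].
transitivity (Q ^+ i *m horner_mx Q (char_poly Q)); last first.
  by rewrite Cayley_Hamilton mulmx0.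
rewrite -[char_poly Q in RHS]coefK poly_def rmorph_sum mulmx_sumr size_char_poly.
apply: eq_bigr => j _.
rewrite -mul_polyC rmorphM /= horner_mx_C rmorphXn /= horner_mx_X.
by rewrite -mulmxE mul_scalar_mx -scalemxAr mulmxE -exprD.
Qed.

Lemma sum_conv_monomials (R : comNzRingType) (s : nat -> R)
    I (r : seq I) (e : I -> R) (m : I -> nat) N :
  \sum_(k < N.+1) s k * (\sum_(j <- r) e j *: 'X^(m j) : {poly R})`_(N - k)
  = \sum_(j <- r) e j * (if (N < m j)%N then 0 else s (N - m j)%N).
Proof.
transitivity ((\poly_(k < N.+1) s k * \sum_(j <- r) e j *: 'X^(m j))`_N).
  by rewrite coefM; apply: eq_bigr => k _; rewrite coef_poly ltn_ord.
rewrite mulr_sumr coef_sum; apply: eq_bigr => j _.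
rewrite -scalerAr coefZ coefMXn coef_poly; case: ltnP => // _.
by rewrite ltnS leq_subr.
Qed.

Lemma coef_sum_odd_monomials (R : nzSemiRingType) (a : nat -> R) p N :
  (\sum_(i < p.+1) a i *: 'X^(2 * i + 1) : {poly R})`_N
  = if odd N && (N./2 <= p)%N then a N./2 else 0.
Proof.
have oddE i : (N == 2 * i + 1)%N = odd N && (i == N./2).
  apply/eqP/andP => [-> | [oN /eqP ->]].
    by rewrite addn1 /= oddM mul2n uphalf_double.
  by rewrite -{1}(odd_double_half N) oN addnC mul2n.
rewrite coef_sum (eq_bigr (fun i : 'I_p.+1 =>
  if odd N && (i == N./2 :> nat) then a i else 0)); last first.
  by move=> i _; rewrite coefZ coefXn oddE; case: ifP; rewrite ?mulr1 ?mulr0.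
rewrite -big_mkcond /=; case: (odd N) => /=; last exact: big_pred0_eq.
by rewrite big_ord1_eq ltnS.
Qed.

Lemma rev_linear_rec (R : pzSemiRingType) (s : nat -> R) d (b : nat -> R) :
  (forall i, \sum_(j < d.+1) b j * s (i + j)%N = 0) ->
  forall m, (d <= m)%N -> \sum_(j < d.+1) b (d - j)%N * s (m - j)%N = 0.
Proof.
move=> rec m le_dm; rewrite -[RHS](rec (m - d)%N) (reindex_inj rev_ord_inj) /=.
apply: eq_bigr => j _; have := ltn_ord j; rewrite ltnS => le_jd.
by rewrite subSS subKn //; congr (_ * s _); lia.
Qed.

Lemma chi_series_odd (chi : nat -> CC) i : chi_series chi (2 * i + 1) = chi i.
Proof. by rewrite /chi_series addn1 /= oddM mul2n uphalf_double. Qed.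

Lemma odd_series_rational (chi : nat -> CC) d (b : nat -> CC) :
  b d = 1 -> (forall i, \sum_(j < d.+1) b j * chi (i + j)%N = 0) ->
  exists (p q : nat) (a c : nat -> CC),
    let den : {poly CC} := 1 + \sum_(1 <= j < q.+1) c j *: 'X^(2 * j) in
    let num : {poly CC} := \sum_(i < p.+1) a i *: 'X^(2 * i + 1) in
    forall N : nat,
      \sum_(k < N.+1) chi_series chi k * den`_(N - k) = num`_N.
Proof.
move=> b_d rec.
pose f N := \sum_(j < d.+1)
  b (d - j)%N * (if (N < 2 * j)%N then 0 else chi_series chi (N - 2 * j)%N).
have f_even N : ~~ odd N -> f N = 0.
  move=> eN; apply: big1 => j _; case: ltnP => [_ | le2jN]; first exact: mulr0.
  by rewrite /chi_series oddB // oddM /= addbF (negbTE eN) mulr0.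
have f_odd m : (d <= m)%N -> f (2 * m + 1)%N = 0.
  move=> le_dm; rewrite -[RHS](rev_linear_rec rec le_dm); apply: eq_bigr => j _.
  have le_jm : (j <= m)%N by have := ltn_ord j; lia.
  rewrite ifF; last by lia.
  have -> : (2 * m + 1 - 2 * j = 2 * (m - j) + 1)%N by lia.
  by rewrite chi_series_odd.
exists d, d, (fun i => f (2 * i + 1)%N), (fun j => b (d - j)%N).
move=> den num N.
have -> : den = \sum_(j < d.+1) b (d - j)%N *: 'X^(2 * j).
  by rewrite /den big_ord_recl subn0 b_d scale1r muln0 expr0 big_add1 big_mkord.
rewrite sum_conv_monomials /num.
rewrite (coef_sum_odd_monomials (fun i => f (2 * i + 1)%N)) -/(f N).
case: (boolP (odd N)) => [oN | eN]; last exact: f_even.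
have N_def : N = (2 * N./2 + 1)%N by rewrite -{1}(odd_double_half N) oN addnC mul2n.
case: leqP => [_ | /ltnW le_dN]; first by rewrite -N_def.
by rewrite [N in f N]N_def f_odd.
Qed.

Lemma scomm_sumr n0 n1 pa pb (A : 'M[CC]_(n0 + n1))
    I (r : seq I) (c : I -> CC) (B : I -> 'M[CC]_(n0 + n1)) :
  scomm pa pb A (\sum_(i <- r) c i *: B i) = \sum_(i <- r) c i *: scomm pa pb A (B i).
Proof.
rewrite /scomm mulmx_sumr mulmx_suml scaler_sumr -sumrB; apply: eq_bigr => i _.
by rewrite scalerBr -scalemxAr -scalemxAl !scalerA mulrC.
Qed.

Section EtaRecurrence.

Variables (n0 n1 : nat) (gen : idx -> idx -> nat -> 'M[CC]_(n0 + n1)).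
Local Notation n := (n0 + n1)%N.
Local Notation T := (Tc gen true true 2).

Definition ad_mx : 'M[CC]_(n * n) := lin_mulmx T - lin_mulmxr T.

Definition eta_step_mx : 'M[CC]_(n * n) := ((- 2^-1) *: ad_mx) ^+ 2.

Lemma mxvec_ad pb Y : mxvec (scomm (par true + par true) pb T Y) = mxvec Y *m ad_mx.
Proof. by rewrite /scomm /sgn mul0n expr0 scale1r mulmxBr !mul_vec_lin /= linearB. Qed.

Lemma mxvec_eta k :
  mxvec (Defs.eta gen k) = mxvec (Tc gen true false 1) *m ((- 2^-1) *: ad_mx) ^+ k.
Proof.
rewrite /Defs.eta linearZ /=.
elim: k => [|k IH]; first by rewrite !expr0 scale1r mulmx1.
rewrite iterS mxvec_ad [in RHS]exprSr -mulmxE mulmxA -IH.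
by rewrite -scalemxAl -scalemxAr scalerA -exprSr.
Qed.

Lemma Zc_char_poly_rec i :
  \sum_(j < (n * n).+1) (char_poly eta_step_mx)`_j *: Zc gen (i + j) = 0.
Proof.
have eta_rec :
    \sum_(j < (n * n).+1) (char_poly eta_step_mx)`_j *: Defs.eta gen (2 * (i + j)) = 0.
  apply: (can_inj mxvecK); rewrite linear_sum [RHS]linear0.
  under eq_bigr do rewrite linearZ /= mxvec_eta exprM scalemxAr.
  by rewrite -mulmx_sumr char_poly_powers_rec mulmx0.
rewrite /Zc; under eq_bigr do rewrite scalerA mulrC -scalerA.
by rewrite -scaler_sumr -scomm_sumr eta_rec /scomm mulmx0 mul0mx scaler0 subr0 scaler0.
Qed.

End EtaRecurrence.

Theorem lemma5p3 (n0 n1 : nat) (gen : idx -> idx -> nat -> 'M[CC]_(n0 + n1))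
  (Hrep : YQ1_rep gen) (Hsimple : simple_rep gen)
  (chi : nat -> CC) (Hchi : forall i : nat, Zc gen i = (chi i)%:M) :
  exists (p q : nat) (a c : nat -> CC),
    let den : {poly CC} := 1 + \sum_(1 <= j < q.+1) c j *: 'X^(2 * j) in
    let num : {poly CC} := \sum_(i < p.+1) a i *: 'X^(2 * i + 1) in
    forall N : nat,
      \sum_(k < N.+1) chi_series chi k * den`_(N - k) = num`_N.
Proof.
have [n_gt0 _] := Hsimple.
pose i0 : 'I_(n0 + n1) := Ordinal n_gt0.
apply: (odd_series_rational (d := ((n0 + n1) * (n0 + n1))%N)
                            (b := fun j => (char_poly (eta_step_mx gen))`_j)).
  by have /monicP := char_poly_monic (eta_step_mx gen); rewrite lead_coefE size_char_poly.
move=> i; have /matrixP/(_ i0 i0) := Zc_char_poly_rec gen i.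
by rewrite summxE mxE; under eq_bigr do rewrite Hchi !mxE eqxx mulr1n.
Qed.
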